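(* (i) On the set $\{a,b\}$ (with $a\neq b$), the multioperation $*$ given by $a*a=\{a\}$, $a*b=\{a,b\}$, $b*a=\{a,b\}$, $b*b=\{a,b\}$ defines a multisemigroup. (ii) This multisemigroup $(\{a,b\},* )$ is not of the form $(\{a,b\},\Phi_{1,\omega}\circ\mu)$ for any finitary multisemigroup with multiplicities $(\{a,b\},\mu)$; that is, there is no finitary multisemigroup with multiplicities $(\{a,b\},\mu)$ such that, for all $x,y,z\in\{a,b\}$, $z\in x*y$ if and only if $\mu_{x,y}(z)\neq0$.
   Context: A multisemigroup is a set $S$ with a map $*:S\times S\to 2^S$ such that $\bigcup_{s\in a*b}s*c=\bigcup_{t\in b*c}a*t$ for all $a,b,c\in S$. $\mathrm{Card}_{\omega}$ is the set of cardinals $\le\omega$ (the first infinite cardinal) with cardinal addition and multiplication truncated at $\omega$; $\Phi_{1,\omega}:\mathrm{Card}_\omega\to\{0,1\}$ sends $0$ to $0$ and every nonzero cardinal to $1$, and subsets of $S$ are identified with functions $S\to\{0,1\}$. A finitary multisemigroup with multiplicities on a non-empty set $S$ is a map $\mu:S\times S\to\{\text{functions }S\to\mathrm{Card}_\omega\}$, $(s,t)\mapsto\mu_{s,t}$, such that all values $\mu_{r,s}(t)$ are finite, $\{t:\mu_{r,s}(t)\neq0\}$ is finite for all $r,s$, and for all $r,s,t\in S$: $\sum_{i\in S}\mu_{s,t}(i)\mu_{r,i}=\sum_{j\in S}\mu_{r,s}(j)\mu_{j,t}$ as functions on $S$ (where $\lambda\nu$ denotes the pointwise sum of $\lambda$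 copies of $\nu$). *)

From HB Require Import structures.
From mathcomp Require Import all_boot.
Set Implicit Arguments. Unset Strict Implicit. Unset Printing Implicit Defensive.

Definition is_multisemigroup (S : finType) (star : S -> S -> {set S}) : Prop :=
  forall a b c : S,
    \bigcup_(s in star a b) star s c = \bigcup_(t in star b c) star a t.

Definition finitary_mswm (S : finType) (mu : S -> S -> S -> nat) : Prop :=
  (* finiteness of values: encoded by the codomain nat;
     finiteness of supports: automatic since S is finite.
     Associativity, evaluated pointwise at every u : S: *)
  forall r s t u : S,
    \sum_(i : S) mu s t i * mu r i u = \sum_(j : S) mu r s j * mu j t u.

Inductive AB := ab_a | ab_b.
Definition AB_to_bool (x : AB) : bool := if x is ab_a then true else false.
Definition bool_to_AB (x : bool) : AB := if x then ab_a else ab_b.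
Lemma AB_boolK : cancel AB_to_bool bool_to_AB. Proof. by case. Qed.
HB.instance Definition _ := Finite.copy AB (can_type AB_boolK).

Definition star_ab (x y : AB) : {set AB} :=
  match x, y with
  | ab_a, ab_a => [set ab_a]
  | _, _ => [set ab_a; ab_b]
  end.

(* Associativity of the multiplicities at (a, a, b), read off at a,
   gives mu_{a,b}(a) mu_{a,a}(a) + mu_{a,b}(b) mu_{a,b}(a) = mu_{a,a}(a) mu_{a,b}(a)
   because mu_{a,a}(b) = 0; hence mu_{a,b}(a) mu_{a,b}(b) = 0, whereas a * b = {a, b}
   forces both factors to be nonzero. *)
From HB Require Import structures.
From mathcomp Require Import all_boot.

Lemma bigcup_AB (A : {set AB}) (F : AB -> {set AB}) :
  \bigcup_(s in A) F s = (if ab_a \in A then F ab_a else set0) :|: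
                         (if ab_b \in A then F ab_b else set0).
Proof.
rewrite big_mkcond (bigD1 ab_a) //= (bigD1 ab_b) //= big_pred0 ?setU0 //.
by case.
Qed.

Lemma star_ab_multisemigroup : is_multisemigroup star_ab.
Proof.
move=> a b c; apply/setP => z.
by case: a; case: b; case: c; case: z; rewrite !bigcup_AB !inE.
Qed.

Lemma mswm_idem_support_mul_eq0 (S : finType) (mu : S -> S -> S -> nat) (a b : S) :
  finitary_mswm mu -> (forall z, z != a -> mu a a z = 0) -> b != a ->
  mu a b a * mu a b b = 0.
Proof.
move=> mu_assoc mu_aa_supp ba.
have := mu_assoc a a b a.
rewrite (bigD1 a) //= [in RHS](bigD1 a) //= [X in _ = _ + X]big1 => [|j /mu_aa_supp -> //].
rewrite addn0 mulnC -{2}[mu a a a * _]addn0 => /addnI /eqP.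
rewrite sum_nat_eq0 => /forall_inP /(_ b ba) /eqP.
by rewrite mulnC.
Qed.

Theorem proposition12 :
  is_multisemigroup star_ab /\
  ~ (exists mu : AB -> AB -> AB -> nat,
        finitary_mswm mu /\
        forall x y z : AB, (z \in star_ab x y) <-> (mu x y z != 0)).
Proof.
split; first exact: star_ab_multisemigroup.
case=> mu [mu_assoc mu_supp].
have mu_aa_supp z : z != ab_a -> mu ab_a ab_a z = 0.
  by move=> za; apply/eqP; apply: contraNT za => /mu_supp; rewrite inE.
have [mu_aba mu_abb] : mu ab_a ab_b ab_a != 0 /\ mu ab_a ab_b ab_b != 0.
  by split; apply/mu_supp; rewrite !inE.
have /eqP := mswm_idem_support_mul_eq0 _ _ _ ab_b mu_assoc mu_aa_supp isT.
by rewrite muln_eq0 (negbTE mu_aba) (negbTE mu_abb).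
Qed.
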